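(* Let $a, d, \varepsilon \in \mathbb{R}$ and $k \in \mathbb{N}$, $k \geq 1$, with $0 < \varepsilon \leq d/2$, $a - \varepsilon > 0$ and $a + kd + \varepsilon < 1$. Let $p : \mathbb{R} \to \{0,1\}$ be the pulse function of the arithmetic progression $A = \{a, a+d, \dots, a+kd\}$ with parameter $\varepsilon$. Let $y_1, y_2 \in \mathbb{Z}$ with $y_2 - y_1 = k$, and let $P$ be a convex quadrilateral with vertices $(\ell_1, y_1)$, $(r_1, y_1)$, $(\ell_2, y_2)$, $(r_2, y_2)$. Suppose that (1) $\ell_1 < r_1$ and $\ell_2 < r_2$; (2) $\{\ell_1\} = a + \varepsilon$ and $\{\ell_2\} = a + kd + \varepsilon$; (3) $\{r_1\} = a - \varepsilon$ and $\{r_2\} = a + kd - \varepsilon$; (4) $k$ divides $\lfloor \ell_2 \rfloor - \lfloor \ell_1 \rfloor$ and $k$ divides $\lfloor r_2 \rfloor - \lfloor r_1 \rfloor$. Then there exists $M \in \mathbb{N}$ such that $$\Big| \big( t\,(-1,0)^T + P \big) \cap \mathbb{Z}^2 \Big| = M + p(\{t\}) \quad \text{for all } t \in [0,1].$$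
   Context: $\{x\} = x - \lfloor x \rfloor$ denotes the fractional part of $x \in \mathbb{R}$. For a finite set $A \subset \mathbb{R}$ and $\varepsilon > 0$, the pulse function of $A$ with parameter $\varepsilon$ is $p(x) = 0$ if $|x - y| < \varepsilon$ for some $y \in A$, and $p(x) = 1$ otherwise. The arithmetic progression defined by $(a,k,d)$ is $\{a, a+d, a+2d, \dots, a+kd\}$. $t\,(-1,0)^T + P = \{x + t(-1,0)^T : x \in P\}$. *)

From Stdlib Require Import Reals Lra Lia ZArith List Classical ClassicalEpsilon.
Open Scope R_scope.

(* floor x : the greatest integer <= x  (up x is the integer with x < up x <= x+1) *)
Definition floorR (x : R) : Z := (up x - 1)%Z.

Definition frac (x : R) : R := x - IZR (floorR x).

Definition arith_prog (a : R) (k : nat) (d : R) (y : R) : Prop :=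
  exists i : nat, (i <= k)%nat /\ y = a + INR i * d.

Definition pulse (A : R -> Prop) (eps : R) (x : R) : nat :=
  if excluded_middle_informative (exists y, A y /\ Rabs (x - y) < eps) then 0%nat else 1%nat.

Definition conv4 (p1 p2 p3 p4 : R * R) (q : R * R) : Prop :=
  exists c1 c2 c3 c4 : R,
    0 <= c1 /\ 0 <= c2 /\ 0 <= c3 /\ 0 <= c4 /\ c1 + c2 + c3 + c4 = 1 /\
    fst q = c1 * fst p1 + c2 * fst p2 + c3 * fst p3 + c4 * fst p4 /\
    snd q = c1 * snd p1 + c2 * snd p2 + c3 * snd p3 + c4 * snd p4.

Definition translate (v : R * R) (S : R * R -> Prop) (q : R * R) : Prop :=
  exists p, S p /\ q = (fst p + fst v, snd p + snd v).

(* |S ∩ Z^2| = N : the lattice points of S are exactly the N distinct entries of a list *)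
Definition lattice_card (S : R * R -> Prop) (N : nat) : Prop :=
  exists l : list (Z * Z), NoDup l /\ length l = N /\
    forall z : Z * Z, In z l <-> S (IZR (fst z), IZR (snd z)).

From Stdlib Require Import Reals ZArith.
From Stdlib Require Import Lra Lia List ClassicalEpsilon.
Open Scope R_scope.

(* P is the trapezoid between the lines y = y1 and y = y1 + k, so its lattice
   points lie on the k + 1 rows y = y1 + n, 0 <= n <= k.  Because k divides the
   differences of the integer parts of the vertices, the left and right edges
   cross row n at FL n + fL n and FR n + fR n, with integers FL n, FR n affine in n
   and fractional parts fL n = a + eps + n d, fR n = a - eps + n d in (0, 1).
   After translating by (-t, 0), t in [0, 1], row n holds the integers
   FL n + [t < fL n] <= X <= FR n - [fR n < t]: that is FR n - FL n points, minus
   one exactly when t lies in the window |t - (a + n d)| < eps.  Since 2 eps <= d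
   these windows are disjoint, so one point is lost iff p({t}) = 0, and the count
   is W - 1 + p({t}) with W the sum of the row widths FR n - FL n. *)

Lemma frac_small (t : R) : 0 <= t < 1 -> frac t = t.
Proof.
  intros [H0 H1]. unfold frac, floorR.
  rewrite <- (tech_up t 1); [simpl; lra | lra | lra].
Qed.

Lemma frac_one : frac 1 = 0.
Proof.
  unfold frac, floorR. rewrite <- (tech_up 1 2); [simpl; lra | lra | lra].
Qed.

Lemma floor_frac_decomp (x : R) : x = IZR (floorR x) + frac x.
Proof. unfold frac. ring. Qed.

Lemma Rabs_lt_iff (x c e : R) : Rabs (x - c) < e <-> c - e < x < c + e.
Proof.
  split.
  - intros H. apply Rabs_def2 in H. lra.
  - intros H. apply Rabs_def1; lra.
Qed.

Lemma shifted_lower_bound (F X : Z) (f t : R) : 0 < f < 1 -> 0 <= t <= 1 ->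
  (IZR F + f <= IZR X + t <-> (F + (if Rlt_dec t f then 1 else 0) <= X)%Z).
Proof.
  intros Hf Ht. destruct (Rlt_dec t f); split; intro H.
  - assert (IZR F < IZR X) as HFX by lra. apply lt_IZR in HFX. lia.
  - apply IZR_le in H. rewrite plus_IZR in H. lra.
  - assert (IZR (F - 1) < IZR X) as HFX by (rewrite minus_IZR; lra).
    apply lt_IZR in HFX. lia.
  - apply IZR_le in H. rewrite plus_IZR in H. lra.
Qed.

Lemma shifted_upper_bound (F X : Z) (f t : R) : 0 < f < 1 -> 0 <= t <= 1 ->
  (IZR X + t <= IZR F + f <-> (X <= F - (if Rlt_dec f t then 1 else 0))%Z).
Proof.
  intros Hf Ht. destruct (Rlt_dec f t); split; intro H.
  - assert (IZR X < IZR F) as HXF by lra. apply lt_IZR in HXF. lia.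
  - apply IZR_le in H. rewrite minus_IZR in H. lra.
  - assert (IZR X < IZR (F + 1)) as HXF by (rewrite plus_IZR; lra).
    apply lt_IZR in HXF. lia.
  - apply IZR_le in H. rewrite minus_IZR in H. lra.
Qed.

Lemma list_sum_map_sub {A : Type} (f g : A -> nat) (l : list A) :
  (forall x, In x l -> (g x <= f x)%nat) ->
  (list_sum (map (fun x => f x - g x) l) + list_sum (map g l))%nat = list_sum (map f l).
Proof.
  induction l as [|x l IH]; simpl; intros Hgf; [reflexivity|].
  specialize (Hgf x (or_introl eq_refl)) as Hx.
  rewrite <- IH by auto. lia.
Qed.

Lemma list_sum_zero {A : Type} (b : A -> nat) (l : list A) :
  (forall x, In x l -> b x = 0%nat) -> list_sum (map b l) = 0%nat.
Proof.
  induction l as [|x l IH]; simpl; intros Hb; [reflexivity|].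
  rewrite Hb, IH; auto.
Qed.

Lemma list_sum_single {A : Type} (b : A -> nat) (l : list A) (x0 : A) :
  NoDup l -> In x0 l -> (forall x, In x l -> x <> x0 -> b x = 0%nat) ->
  list_sum (map b l) = b x0.
Proof.
  induction l as [|x l IH]; simpl; intros Hnd Hin Hb; [contradiction|].
  inversion Hnd as [|? ? Hx Hl]; subst.
  destruct Hin as [<- | Hin].
  - rewrite list_sum_zero; [lia|]. intros y Hy. apply Hb; [auto|].
    intros ->; contradiction.
  - rewrite IH, Hb; auto. intros ->; contradiction.
Qed.

Lemma NoDup_flat_map {A B : Type} (g : A -> list B) (l : list A) :
  NoDup l -> (forall x, In x l -> NoDup (g x)) ->
  (forall x x' z, In z (g x) -> In z (g x') -> x = x') ->
  NoDup (flat_map g l).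
Proof.
  induction l as [|x l IH]; simpl; intros Hl Hg Hdisj; [constructor|].
  inversion Hl; subst. apply NoDup_app; auto.
  intros z Hz Hz'. apply in_flat_map in Hz'. destruct Hz' as [x' [Hx' Hzx']].
  assert (x = x') by (eapply Hdisj; eauto). subst. contradiction.
Qed.

Definition int_row (lo hi c : Z) : list (Z * Z) :=
  map (fun i : nat => (lo + Z.of_nat i, c)%Z) (seq 0 (Z.to_nat (hi - lo + 1))).

Lemma in_int_row (lo hi c X Y : Z) :
  In (X, Y) (int_row lo hi c) <-> Y = c /\ (lo <= X <= hi)%Z.
Proof.
  unfold int_row. rewrite in_map_iff. split.
  - intros [i [Hi Hs]]. apply in_seq in Hs. injection Hi as <- <-. lia.
  - intros [-> HX]. exists (Z.to_nat (X - lo)). split.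
    + f_equal. lia.
    + apply in_seq. lia.
Qed.

Lemma NoDup_int_row (lo hi c : Z) : NoDup (int_row lo hi c).
Proof.
  apply NoDup_map_NoDup_ForallPairs; [|apply seq_NoDup].
  intros i j _ _ H. injection H. lia.
Qed.

Lemma length_int_row (lo hi c : Z) :
  length (int_row lo hi c) = Z.to_nat (hi - lo + 1).
Proof. unfold int_row. rewrite length_map, length_seq. reflexivity. Qed.

Lemma lattice_card_rows (P : R * R -> Prop) (y0 : Z) (k : nat) (lo hi : nat -> Z) :
  (forall X Y : Z, P (IZR X, IZR Y) <->
     exists n, (n <= k)%nat /\ Y = (y0 + Z.of_nat n)%Z /\ (lo n <= X <= hi n)%Z) ->
  lattice_card P (list_sum (map (fun n => Z.to_nat (hi n - lo n + 1)) (seq 0 (S k)))).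
Proof.
  intros HP.
  set (row := fun n => int_row (lo n) (hi n) (y0 + Z.of_nat n)%Z).
  exists (flat_map row (seq 0 (S k))). split; [|split].
  - apply NoDup_flat_map; [apply seq_NoDup | intros; apply NoDup_int_row |].
    intros n n' [X Y] H H'. apply in_int_row in H, H'. lia.
  - rewrite length_flat_map. f_equal. apply map_ext. intro n. apply length_int_row.
  - intros [X Y]. cbn [fst snd]. rewrite HP, in_flat_map. split.
    + intros [n [Hn Hrow]]. apply in_seq in Hn. apply in_int_row in Hrow.
      exists n. split; [lia | exact Hrow].
    + intros [n [Hn Hrow]]. exists n. split; [apply in_seq; lia|].
      apply in_int_row. exact Hrow.
Qed.

Lemma translate_left (t : R) (S : R * R -> Prop) (u v : R) :
  translate (t * -1, t * 0) S (u, v) <-> S (u + t, v).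
Proof.
  split.
  - intros [[p1 p2] [Hp He]]. simpl in He. injection He as Hu Hv.
    replace (u + t, v) with (p1, p2); [exact Hp | f_equal; lra].
  - intros H. exists (u + t, v). split; [exact H | simpl; f_equal; ring].
Qed.

Lemma interp_lt (s l1 r1 l2 r2 : R) : 0 <= s <= 1 -> l1 < r1 -> l2 < r2 ->
  (1 - s) * l1 + s * l2 < (1 - s) * r1 + s * r2.
Proof.
  intros Hs H1 H2. destruct (Rlt_dec 0 (1 - s)).
  - assert (0 < (1 - s) * (r1 - l1)) by (apply Rmult_lt_0_compat; lra).
    assert (0 <= s * (r2 - l2)) by (apply Rmult_le_pos; lra). lra.
  - assert (0 < s * (r2 - l2)) by (apply Rmult_lt_0_compat; lra).
    assert (0 <= (1 - s) * (r1 - l1)) by (apply Rmult_le_pos; lra). lra.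
Qed.

Lemma conv4_trapezoid (l1 r1 l2 r2 y1 y2 K x y : R) :
  K > 0 -> y2 = y1 + K -> l1 < r1 -> l2 < r2 ->
  conv4 (l1, y1) (r1, y1) (l2, y2) (r2, y2) (x, y) <->
  (0 <= (y - y1) / K <= 1 /\
   (1 - (y - y1) / K) * l1 + ((y - y1) / K) * l2 <= x <=
   (1 - (y - y1) / K) * r1 + ((y - y1) / K) * r2).
Proof.
  intros HK Hy H1 H2. split.
  - intros (c1 & c2 & c3 & c4 & h1 & h2 & h3 & h4 & hsum & hx & hy). simpl in hx, hy.
    (* the height is carried by the weights c3 + c4 of the upper vertices *)
    assert (Hs : (y - y1) / K = c3 + c4)
      by (rewrite hy, Hy; replace c1 with (1 - c2 - c3 - c4) by lra; field; lra).
    rewrite Hs.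
    assert (El : x - ((1 - (c3 + c4)) * l1 + (c3 + c4) * l2) = c2 * (r1 - l1) + c4 * (r2 - l2))
      by (rewrite hx; replace c1 with (1 - c2 - c3 - c4) by lra; ring).
    assert (Er : (1 - (c3 + c4)) * r1 + (c3 + c4) * r2 - x = c1 * (r1 - l1) + c3 * (r2 - l2))
      by (rewrite hx; replace c2 with (1 - c1 - c3 - c4) by lra; ring).
    assert (0 <= c2 * (r1 - l1)) by (apply Rmult_le_pos; lra).
    assert (0 <= c4 * (r2 - l2)) by (apply Rmult_le_pos; lra).
    assert (0 <= c1 * (r1 - l1)) by (apply Rmult_le_pos; lra).
    assert (0 <= c3 * (r2 - l2)) by (apply Rmult_le_pos; lra).
    lra.
  - set (s := (y - y1) / K). intros [Hs Hx].
    pose proof (interp_lt s l1 r1 l2 r2 Hs H1 H2) as HLR.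
    set (L := (1 - s) * l1 + s * l2) in *. set (R := (1 - s) * r1 + s * r2) in *.
    (* x = (1 - lam) L + lam R, and the four weights are products *)
    set (lam := (x - L) / (R - L)).
    assert (E1 : 1 - lam = (R - x) / (R - L)) by (unfold lam; field; lra).
    assert (0 <= lam)
      by (unfold lam, Rdiv; apply Rmult_le_pos; [lra | left; apply Rinv_0_lt_compat; lra]).
    assert (0 <= 1 - lam)
      by (rewrite E1; unfold Rdiv; apply Rmult_le_pos; [lra | left; apply Rinv_0_lt_compat; lra]).
    exists ((1 - s) * (1 - lam)), ((1 - s) * lam), (s * (1 - lam)), (s * lam).
    repeat split; try (apply Rmult_le_pos; lra); try ring; simpl.
    + unfold lam, L, R. field. unfold L, R in HLR. lra.
    + unfold s. rewrite Hy. field. lra.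
Qed.

Lemma interp_arith (F m : Z) (c d : R) (k n : nat) : (0 < k)%nat ->
  (1 - INR n / INR k) * (IZR F + c) +
  (INR n / INR k) * (IZR (F + m * Z.of_nat k) + (c + INR k * d)) =
  IZR (F + Z.of_nat n * m) + (c + INR n * d).
Proof.
  intros Hk. apply lt_0_INR in Hk.
  rewrite !plus_IZR, !mult_IZR, <- !INR_IZR_INZ. field. lra.
Qed.

Section ArithmeticTrapezoid.

Variables (a d eps : R) (k : nat) (y1 Fl Fr ml mr : Z) (l1 r1 l2 r2 : R).
Hypothesis k_pos : (1 <= k)%nat.
Hypothesis eps_pos : 0 < eps.
Hypothesis eps_le : eps <= d / 2.
Hypothesis a_low : a - eps > 0.
Hypothesis a_high : a + INR k * d + eps < 1.
Hypothesis l1_eq : l1 = IZR Fl + (a + eps).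
Hypothesis l2_eq : l2 = IZR (Fl + ml * Z.of_nat k) + (a + eps + INR k * d).
Hypothesis r1_eq : r1 = IZR Fr + (a - eps).
Hypothesis r2_eq : r2 = IZR (Fr + mr * Z.of_nat k) + (a - eps + INR k * d).
Hypothesis l1_lt_r1 : l1 < r1.
Hypothesis l2_lt_r2 : l2 < r2.

(* Row n (at height y1 + n) of the trapezoid runs from FL n + fL n to FR n + fR n. *)
Let FL (n : nat) : Z := (Fl + Z.of_nat n * ml)%Z.
Let FR (n : nat) : Z := (Fr + Z.of_nat n * mr)%Z.
Let fL (n : nat) : R := a + eps + INR n * d.
Let fR (n : nat) : R := a - eps + INR n * d.

(* After translating by -t, the integers X of row n are those in [lo n t, hi n t]. *)
Let lo (n : nat) (t : R) : Z := (FL n + if Rlt_dec t (fL n) then 1 else 0)%Z.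
Let hi (n : nat) (t : R) : Z := (FR n - if Rlt_dec (fR n) t then 1 else 0)%Z.

(* Row n loses a lattice point exactly when t falls in the window around a + n d. *)
Let window (n : nat) (t : R) : nat :=
  if Rlt_dec (Rabs (t - (a + INR n * d))) eps then 1%nat else 0%nat.

Lemma window_01 (n : nat) (t : R) : window n t = 0%nat \/ window n t = 1%nat.
Proof. unfold window. destruct Rlt_dec; auto. Qed.

Lemma k_INR_pos : 1 <= INR k.
Proof. rewrite <- INR_1. apply le_INR. exact k_pos. Qed.

Lemma row_ratio_unit (n : nat) : (n <= k)%nat -> 0 <= INR n / INR k <= 1.
Proof.
  intros Hn. pose proof k_INR_pos. apply le_INR in Hn. split.
  - unfold Rdiv. apply Rmult_le_pos; [apply pos_INR | left; apply Rinv_0_lt_compat; lra].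
  - apply Rmult_le_reg_r with (INR k); [lra|].
    unfold Rdiv. rewrite Rmult_assoc, Rinv_l by lra. lra.
Qed.

Lemma edge_fracs_unit (n : nat) : (n <= k)%nat -> 0 < fR n /\ fL n < 1.
Proof.
  intros Hn. unfold fR, fL.
  assert (0 <= INR n * d <= INR k * d).
  { apply le_INR in Hn. split; [apply Rmult_le_pos; [apply pos_INR | lra] | nra]. }
  lra.
Qed.

Lemma left_edge (n : nat) : (1 - INR n / INR k) * l1 + (INR n / INR k) * l2 = IZR (FL n) + fL n.
Proof. rewrite l1_eq, l2_eq. apply interp_arith. lia. Qed.

Lemma right_edge (n : nat) : (1 - INR n / INR k) * r1 + (INR n / INR k) * r2 = IZR (FR n) + fR n.
Proof. rewrite r1_eq, r2_eq. apply interp_arith. lia. Qed.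

Lemma row_width_pos (n : nat) : (n <= k)%nat -> (FL n < FR n)%Z.
Proof.
  intros Hn. pose proof (edge_fracs_unit n Hn).
  pose proof (interp_lt _ l1 r1 l2 r2 (row_ratio_unit n Hn) l1_lt_r1 l2_lt_r2) as Hlt.
  rewrite left_edge, right_edge in Hlt.
  apply lt_IZR. unfold fL, fR in *. lra.
Qed.

Lemma translated_trapezoid_rows (t : R) (X Y : Z) : 0 <= t <= 1 ->
  translate (t * -1, t * 0)
    (conv4 (l1, IZR y1) (r1, IZR y1) (l2, IZR (y1 + Z.of_nat k)) (r2, IZR (y1 + Z.of_nat k)))
    (IZR X, IZR Y) <->
  exists n, (n <= k)%nat /\ Y = (y1 + Z.of_nat n)%Z /\ (lo n t <= X <= hi n t)%Z.
Proof.
  intros Ht. pose proof k_INR_pos as Hk.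
  assert (Hlevel : forall n : nat, (IZR (y1 + Z.of_nat n) - IZR y1) / INR k = INR n / INR k)
    by (intro n; rewrite plus_IZR, <- INR_IZR_INZ; f_equal; ring).
  assert (Hrow : forall n, (n <= k)%nat ->
    ((1 - INR n / INR k) * l1 + (INR n / INR k) * l2 <= IZR X + t <=
     (1 - INR n / INR k) * r1 + (INR n / INR k) * r2 <-> (lo n t <= X <= hi n t)%Z)).
  { intros n Hn. rewrite left_edge, right_edge. destruct (edge_fracs_unit n Hn).
    assert (0 < fL n < 1 /\ 0 < fR n < 1) as [HfL HfR] by (unfold fL, fR in *; lra).
    rewrite (shifted_lower_bound _ X _ t HfL Ht), (shifted_upper_bound _ X _ t HfR Ht).
    reflexivity. }
  rewrite translate_left, (conv4_trapezoid l1 r1 l2 r2 (IZR y1) _ (INR k));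
    [| lra | rewrite plus_IZR, INR_IZR_INZ; reflexivity | exact l1_lt_r1 | exact l2_lt_r2].
  split.
  - intros [Hs HX].
    assert (Hn : (0 <= Y - y1 <= Z.of_nat k)%Z).
    { assert (E : IZR Y - IZR y1 = ((IZR Y - IZR y1) / INR k) * INR k) by (field; lra).
      split; [apply le_IZR | apply le_IZR; rewrite <- INR_IZR_INZ];
        rewrite minus_IZR; rewrite E; nra. }
    exists (Z.to_nat (Y - y1)).
    assert (HY : Y = (y1 + Z.of_nat (Z.to_nat (Y - y1)))%Z) by lia.
    split; [lia | split; [exact HY |]].
    rewrite HY, Hlevel in HX. apply Hrow; [lia | exact HX].
  - intros [n [Hn [-> HX]]]. rewrite Hlevel.
    split; [apply row_ratio_unit; exact Hn | apply Hrow; assumption].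
Qed.

Lemma row_length (n : nat) (t : R) :
  (hi n t - lo n t + 1 = FR n - FL n - Z.of_nat (window n t))%Z.
Proof.
  unfold hi, lo, window.
  destruct (Rlt_dec (Rabs (t - (a + INR n * d))) eps) as [Hw | Hw];
    rewrite Rabs_lt_iff in Hw; unfold fL, fR in *;
    destruct (Rlt_dec (a - eps + INR n * d) t), (Rlt_dec t (a + eps + INR n * d));
    simpl; try lia; lra.
Qed.

(* Windows have length 2 eps <= d while their centres are d apart. *)
Lemma windows_disjoint (n i : nat) (t : R) :
  window n t = 1%nat -> window i t = 1%nat -> n = i.
Proof.
  unfold window.
  destruct (Rlt_dec (Rabs (t - (a + INR n * d))) eps) as [Hn|]; [|discriminate].
  destruct (Rlt_dec (Rabs (t - (a + INR i * d))) eps) as [Hi|]; [|discriminate].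
  intros _ _. rewrite Rabs_lt_iff in Hn, Hi.
  destruct (Nat.lt_total n i) as [Hlt | [Heq | Hlt]]; [exfalso | exact Heq | exfalso];
    apply (le_INR (S _)) in Hlt; rewrite S_INR in Hlt; nra.
Qed.

(* For t in [0, 1] the window test at t is the pulse test at {t}; at t = 1 no
   window is hit since the progression stays inside (eps, 1 - eps). *)
Lemma window_frac (n : nat) (t : R) : (n <= k)%nat -> 0 <= t <= 1 ->
  window n t = 1%nat <-> Rabs (frac t - (a + INR n * d)) < eps.
Proof.
  intros Hn Ht. pose proof (edge_fracs_unit n Hn). unfold window, fL, fR in *.
  destruct (Req_dec t 1) as [-> | Ht1].
  - rewrite frac_one, Rabs_lt_iff.
    destruct (Rlt_dec _ eps) as [Hw|]; [rewrite Rabs_lt_iff in Hw|]; split; intro; lra || discriminate.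
  - rewrite frac_small by lra.
    destruct (Rlt_dec _ eps); split; intro; auto; contradiction || discriminate.
Qed.

Lemma window_count (t : R) : 0 <= t <= 1 ->
  (list_sum (map (fun n => window n t) (seq 0 (S k))) + pulse (arith_prog a k d) eps (frac t))%nat = 1%nat.
Proof.
  intros Ht. unfold pulse.
  destruct (excluded_middle_informative _) as [[y [[i [Hi ->]] Hy]] | Hnone].
  - apply (window_frac i t Hi Ht) in Hy.
    rewrite (list_sum_single _ _ i); [lia | apply seq_NoDup | apply in_seq; lia |].
    intros n _ Hni. destruct (window_01 n t) as [Hw | Hw]; [exact Hw |].
    exfalso. exact (Hni (windows_disjoint n i t Hw Hy)).
  - rewrite list_sum_zero; [reflexivity|].
    intros n Hn. apply in_seq in Hn.
    destruct (window_01 n t) as [Hw | Hw]; [exact Hw | exfalso]. apply Hnone. exists (a + INR n * d). split.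
    + exists n. split; [lia | reflexivity].
    + apply window_frac; [lia | exact Ht | exact Hw].
Qed.

Lemma translated_trapezoid_card :
  exists M : nat, forall t : R, 0 <= t <= 1 ->
    lattice_card
      (translate (t * -1, t * 0)
        (conv4 (l1, IZR y1) (r1, IZR y1) (l2, IZR (y1 + Z.of_nat k)) (r2, IZR (y1 + Z.of_nat k))))
      (M + pulse (arith_prog a k d) eps (frac t))%nat.
Proof.
  set (width := fun n => Z.to_nat (FR n - FL n)).
  set (W := list_sum (map width (seq 0 (S k)))).
  exists (W - 1)%nat. intros t Ht.
  assert (HW : (1 <= W)%nat).
  { unfold W, width. simpl. pose proof (row_width_pos 0). lia. }
  assert (Hrow : forall n, In n (seq 0 (S k)) ->
            Z.to_nat (hi n t - lo n t + 1)%Z = (width n - window n t)%nat /\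
            (window n t <= width n)%nat).
  { intros n Hn. apply in_seq in Hn. pose proof (row_width_pos n).
    rewrite row_length. unfold width. destruct (window_01 n t); lia. }
  pose proof (list_sum_map_sub width (fun n => window n t) (seq 0 (S k))
                (fun n Hn => proj2 (Hrow n Hn))) as Hsum.
  pose proof (window_count t Ht) as Hcount.
  replace (W - 1 + pulse (arith_prog a k d) eps (frac t))%nat
    with (list_sum (map (fun n => Z.to_nat (hi n t - lo n t + 1)%Z) (seq 0 (S k)))).
  - apply (lattice_card_rows _ y1). intros X Y. apply translated_trapezoid_rows, Ht.
  - rewrite (map_ext_in _ _ _ (fun n Hn => proj1 (Hrow n Hn))). fold W in Hsum. lia.
Qed.

End ArithmeticTrapezoid.

Theorem lemma1 (a d eps : R) (k : nat) (y1 y2 : Z) (l1 r1 l2 r2 : R) :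
  (1 <= k)%nat ->
  0 < eps -> eps <= d / 2 ->
  a - eps > 0 -> a + INR k * d + eps < 1 ->
  (y2 - y1)%Z = Z.of_nat k ->
  l1 < r1 -> l2 < r2 ->
  frac l1 = a + eps -> frac l2 = a + INR k * d + eps ->
  frac r1 = a - eps -> frac r2 = a + INR k * d - eps ->
  (Z.of_nat k | floorR l2 - floorR l1)%Z ->
  (Z.of_nat k | floorR r2 - floorR r1)%Z ->
  exists M : nat, forall t : R, 0 <= t <= 1 ->
    lattice_card
      (translate (t * -1, t * 0)
         (conv4 (l1, IZR y1) (r1, IZR y1) (l2, IZR y2) (r2, IZR y2)))
      (M + pulse (arith_prog a k d) eps (frac t))%nat.
Proof.
  intros Hk Heps Hed Ha Hak Hy Hlr1 Hlr2 Hfl1 Hfl2 Hfr1 Hfr2 [ml Hml] [mr Hmr].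
  replace y2 with (y1 + Z.of_nat k)%Z by lia.
  (* write the vertices as integer part plus prescribed fractional part;
     the divisibility hypotheses give the integer parts of the upper vertices *)
  apply (translated_trapezoid_card a d eps k y1 (floorR l1) (floorR r1) ml mr);
    try assumption.
  - rewrite <- Hfl1. apply floor_frac_decomp.
  - replace (floorR l1 + ml * Z.of_nat k)%Z with (floorR l2) by lia.
    replace (a + eps + INR k * d) with (frac l2) by lra. apply floor_frac_decomp.
  - rewrite <- Hfr1. apply floor_frac_decomp.
  - replace (floorR r1 + mr * Z.of_nat k)%Z with (floorR r2) by lia.
    replace (a - eps + INR k * d) with (frac r2) by lra. apply floor_frac_decomp.
Qed.
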